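(* Fix $1<p<\infty$. Let $X$ and $Y$ be Banach spaces such that $X$ has the approximation property and $\mathcal A(X,Y)\subsetneq\mathcal K(X,Y)$. Let $Z_p:=\big(\bigoplus_{j=0}^\infty X_j\big)_{\ell^p}$ with $X_0=Y$ and $X_j=X$ for $j\ge1$, and for $\emptyset\neq A\subsetneq\mathbb N$ let \[ \mathcal I_A:=\{S\in\mathcal K(Z_p): P_0SJ_0\in\mathcal A(Y),\ P_0SJ_k\in\mathcal A(X,Y)\text{ for all }k\in A\}. \] Suppose $\emptyset\neq A,B\subsetneq\mathbb N$ and there is a permutation $\sigma:\mathbb N\to\mathbb N$ with $\sigma(A)=B$. Then $\mathcal I_A$ and $\mathcal I_B$ are isomorphic as Banach algebras. In particular this holds whenever $|A|=|B|\in\mathbb N\cup\{\infty\}$ and $|\mathbb N\setminus A|=|\mathbb N\setminus B|\in\mathbb N\cup\{\infty\}$.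
   Context: $\mathbb N=\{1,2,3,\ldots\}$; $|A|$ denotes cardinality. For Banach spaces $E,F$, $\mathcal K(E,F)$ denotes the compact operators and $\mathcal A(E,F)$ the operator-norm closure of the finite-rank operators $E\to F$; $\mathcal A(E)=\mathcal A(E,E)$. $P_m:Z_p\to X_m$ and $J_n:X_n\to Z_p$ ($m,n\ge0$) are the natural coordinate projections and inclusions. *)

From HB Require Import structures.
From mathcomp Require Import all_boot all_order all_algebra.
From mathcomp Require Import all_classical all_reals all_analysis.
Set Implicit Arguments. Unset Strict Implicit. Unset Printing Implicit Defensive.
Import Order.TTheory GRing.Theory Num.Theory.
Import numFieldNormedType.Exports.
Local Open Scope classical_set_scope.
Local Open Scope ring_scope.

Definition bdd_lin (R : realType) (E F : normedModType R) (f : E -> F) : Prop :=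
  (forall (a : R) (u v : E), f (a *: u + v) = a *: f u + f v) /\
  exists M : R, forall x : E, `|f x| <= M * `|x|.

Definition finite_rank (R : realType) (E F : normedModType R) (f : E -> F) : Prop :=
  exists (n : nat) (v : 'I_n -> F),
    forall x : E, exists c : 'I_n -> R, f x = \sum_(i < n) c i *: v i.

Definition approx_op (R : realType) (E F : normedModType R) (S : E -> F) : Prop :=
  bdd_lin S /\
  forall eps : R, 0 < eps -> exists T : E -> F,
    [/\ bdd_lin T, finite_rank T & forall x : E, `|S x - T x| <= eps * `|x|].

Definition compact_op (R : realType) (E F : normedModType R) (S : E -> F) : Prop :=
  bdd_lin S /\ compact (closure (S @` [set x : E | `|x| <= 1])).

Definition approx_property (R : realType) (E : normedModType R) : Prop :=
  forall K : set E, compact K -> forall eps : R, 0 < eps ->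
    exists T : E -> E, [/\ bdd_lin T, finite_rank T &
      forall x, K x -> `|T x - x| <= eps].

(* A point of Z_p is a pair (y, f) with y : Y the 0-th coordinate and
   f k : X the (k+1)-th coordinate, k = 0,1,2,... *)
Definition lp_carrier (R : realType) (X Y : normedModType R) := (Y * (nat -> X))%type.

Definition lp_mem (R : realType) (X Y : normedModType R) (p : R)
  (z : lp_carrier X Y) : Prop :=
  cvgn (series (fun k => `|z.2 k| `^ p)).

(* the l^p norm (meaningful on lp_mem points) *)
Definition lp_norm (R : realType) (X Y : normedModType R) (p : R)
  (z : lp_carrier X Y) : R :=
  (`|z.1| `^ p + limn (series (fun k => `|z.2 k| `^ p))) `^ p^-1.

Definition Zp (R : realType) (X Y : normedModType R) (p : R) : Type :=
  {z : lp_carrier X Y | lp_mem p z}.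

HB.instance Definition _ (R : realType) (X Y : normedModType R) (p : R) :=
  gen_eqMixin (Zp X Y p).
HB.instance Definition _ (R : realType) (X Y : normedModType R) (p : R) :=
  gen_choiceMixin (Zp X Y p).

Definition zval (R : realType) (X Y : normedModType R) (p : R) (z : Zp X Y p)
  : lp_carrier X Y := proj1_sig z.

Definition zdist (R : realType) (X Y : normedModType R) (p : R) (z w : Zp X Y p) : R :=
  lp_norm p (zval z - zval w).

Definition zopen (R : realType) (X Y : normedModType R) (p : R) (U : set (Zp X Y p))
  : Prop :=
  forall z, U z -> exists2 e : R, 0 < e & forall w, zdist z w < e -> U w.

Lemma zopenT (R : realType) (X Y : normedModType R) (p : R) : zopen (@setT (Zp X Y p)).
Proof. by move=> z _; exists 1 => //. Qed.

Lemma zopenI (R : realType) (X Y : normedModType R) (p : R) :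
  setI_closed (@zopen R X Y p).
Proof.
move=> U V oU oV z [/oU [e1 e1p h1] /oV [e2 e2p h2]].
exists (Num.min e1 e2); first by rewrite lt_min e1p e2p.
by move=> w; rewrite lt_min => /andP[w1 w2]; split; [exact: h1|exact: h2].
Qed.

Lemma zopen_bigU (R : realType) (X Y : normedModType R) (p : R) (I : Type)
  (f : I -> set (Zp X Y p)) : (forall i, zopen (f i)) -> zopen (\bigcup_i f i).
Proof.
move=> hf z [i _ fiz]; have [e ep h] := hf i z fiz.
by exists e => // w /h fw; exists i.
Qed.

HB.instance Definition _ (R : realType) (X Y : normedModType R) (p : R) :=
  @isOpenTopological.Build (Zp X Y p) (@zopen R X Y p) (@zopenT R X Y p)
    (@zopenI R X Y p) (@zopen_bigU R X Y p).

Lemma cvg_series_evzero (R : realType) (u : R ^nat) (N : nat) :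
  (forall j, (N <= j)%N -> u j = 0) -> cvgn (series u).
Proof.
move=> u0; apply: (is_cvg_near_cst (series u N)).
near=> n; have Nn : (N <= n)%N by near: n; exists N.
rewrite /series /= (@big_cat_nat _ _ _ N 0 n _ _ (leq0n N) Nn) /=.
rewrite [X in _ + X]big1_seq ?addr0 //.
by move=> j /andP[_]; rewrite mem_index_iota => /andP[Nj _]; exact: u0.
Unshelve. all: by end_near.
Qed.

Lemma lp_mem_J0 (R : realType) (X Y : normedModType R) (p : R) (hp : 1 < p) (y : Y) :
  lp_mem p ((y, fun _ => 0) : lp_carrier X Y).
Proof.
apply: (@cvg_series_evzero _ _ 0) => j _ /=.
by rewrite normr0 powR0 // gt_eqF // (lt_trans ltr01 hp).
Qed.

Lemma lp_mem_Jk (R : realType) (X Y : normedModType R) (p : R) (hp : 1 < p)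
  (k : nat) (x : X) :
  lp_mem p ((0, fun j => if j == k.-1 then x else 0) : lp_carrier X Y).
Proof.
apply: (@cvg_series_evzero _ _ k.+1) => j kj /=.
have -> : (j == k.-1) = false.
  by apply/negbTE; apply/eqP => jk; move: kj; rewrite jk; case: (k) => // k0; rewrite ltnNge leqnSn.
by rewrite normr0 powR0 // gt_eqF // (lt_trans ltr01 hp).
Qed.

Definition J0 (R : realType) (X Y : normedModType R) (p : R) (hp : 1 < p) (y : Y)
  : Zp X Y p := exist _ _ (@lp_mem_J0 R X Y p hp y).

Definition Jk (R : realType) (X Y : normedModType R) (p : R) (hp : 1 < p) (k : nat)
  (x : X) : Zp X Y p := exist _ _ (@lp_mem_Jk R X Y p hp k x).

Definition P0 (R : realType) (X Y : normedModType R) (p : R) (z : Zp X Y p) : Y :=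
  (zval z).1.

(* linearity is phrased without needing closure lemmas: whenever
   z3 = a z1 + z2 in the ambient vector space, S z3 = a S z1 + S z2 *)
Definition zbdd_lin (R : realType) (X Y : normedModType R) (p : R)
  (S : Zp X Y p -> Zp X Y p) : Prop :=
  (forall (a : R) (z1 z2 z3 : Zp X Y p), zval z3 = a *: zval z1 + zval z2 ->
      zval (S z3) = a *: zval (S z1) + zval (S z2)) /\
  exists M : R, forall z, lp_norm p (zval (S z)) <= M * lp_norm p (zval z).

Definition zcompact_op (R : realType) (X Y : normedModType R) (p : R)
  (S : Zp X Y p -> Zp X Y p) : Prop :=
  zbdd_lin S /\ compact (closure (S @` [set z | lp_norm p (zval z) <= 1])).

(* the ideal I_A (A a set of indices in N = {1,2,...}) *)
Definition I_ideal (R : realType) (X Y : normedModType R) (p : R) (hp : 1 < p)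
  (A : set nat) : set (Zp X Y p -> Zp X Y p) :=
  [set S | [/\ zcompact_op S,
     approx_op (fun y : Y => P0 (S (J0 X hp y))) &
     forall k, A k -> approx_op (fun x : X => P0 (S (Jk Y hp k x)))]].

(* isomorphism of Banach algebras between two subalgebras I, I' of B(Z_p):
   a bijection I -> I' that is linear, multiplicative, bounded, with bounded
   inverse (operator-norm bounds written out) *)
Definition banach_alg_iso (R : realType) (X Y : normedModType R) (p : R)
  (I I' : set (Zp X Y p -> Zp X Y p)) : Prop :=
  exists Phi : (Zp X Y p -> Zp X Y p) -> (Zp X Y p -> Zp X Y p),
  [/\ (forall S, I S -> I' (Phi S)),
      {in I &, injective Phi} /\ (forall T, I' T -> exists2 S, I S & Phi S = T),
      (forall (a : R) S1 S2 S3, I S1 -> I S2 -> I S3 ->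
        (forall z, zval (S3 z) = a *: zval (S1 z) + zval (S2 z)) ->
        forall z, zval (Phi S3 z) = a *: zval (Phi S1 z) + zval (Phi S2 z)),
      (forall S1 S2, I S1 -> I S2 -> Phi (S1 \o S2) = Phi S1 \o Phi S2) &
      exists2 C : R, 0 < C & forall S, I S -> forall M : R,
        ((forall z, lp_norm p (zval (S z)) <= M * lp_norm p (zval z)) ->
          forall z, lp_norm p (zval (Phi S z)) <= C * M * lp_norm p (zval z)) /\
        ((forall z, lp_norm p (zval (Phi S z)) <= M * lp_norm p (zval z)) ->
          forall z, lp_norm p (zval (S z)) <= C * M * lp_norm p (zval z))].

Definition Npos : set nat := [set k | (0 < k)%N].

From Pilot Require Import Defs.
From HB Require Import structures.
From mathcomp Require Import all_boot all_order all_algebra.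
From mathcomp Require Import all_classical all_reals all_analysis.
Import Order.TTheory GRing.Theory Num.Theory.
Import numFieldNormedType.Exports.
Local Open Scope classical_set_scope.
Local Open Scope ring_scope.
Local Open Scope card_scope.

(* A permutation sigma of the indices k >= 1 with sigma(A) = B induces
   the coordinate permutation P of Z_p that fixes the Y-coordinate.  It is a
   linear isometric bijection (the l^p norm is invariant under rearrangement of
   a series of nonnegative terms), so S |-> P^-1 S P is an isometric algebra
   automorphism of K(Z_p).  Since P J_k = J_(sigma^-1 k) and P_0 P^-1 = P_0, it
   maps I_A onto I_B.  If only the cardinalities of A, B and of their
   complements agree, gluing a bijection A -> B with a bijection of the
   complements gives such a sigma. *)

Section NonnegativeSeries.
Context {R : realType}.

Lemma ler_sum_uniq_subset (I : eqType) (s s' : seq I) (F : I -> R) :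
  (forall i, 0 <= F i) -> uniq s -> uniq s' -> {subset s <= s'} ->
  \sum_(i <- s) F i <= \sum_(i <- s') F i.
Proof.
move=> F0 us us' ss'.
have s_perm : perm_eq s [seq i <- s' | i \in s].
  apply: uniq_perm => //; first exact: filter_uniq.
  by move=> i; rewrite mem_filter; apply/idP/andP => [si|[]//]; split=> //; exact: ss'.
rewrite (perm_big _ s_perm) big_filter [leRHS](bigID (mem s)) /=.
by rewrite lerDl sumr_ge0.
Qed.

Lemma nondecreasing_series_ge0 {u : R ^nat} :
  (forall n, 0 <= u n) -> nondecreasing_seq (series u).
Proof. by move=> u0; exact: (@nondecreasing_series _ u xpredT 0). Qed.

Lemma series_comp_inj_le {u : R ^nat} {t : nat -> nat} :
  (forall n, 0 <= u n) -> injective t ->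
  forall n, exists m, series (u \o t) n <= series u m.
Proof.
move=> u0 tinj n; exists (\max_(i <- index_iota 0 n) (t i).+1)%N.
rewrite /series /= -(big_map t xpredT u) ler_sum_uniq_subset //.
- by rewrite (map_inj_uniq tinj) iota_uniq.
- exact: iota_uniq.
move=> _ /mapP[i ni ->]; rewrite mem_index_iota leq0n /=.
exact: (@leq_bigmax_seq _ _ xpredT (fun i => (t i).+1) i ni).
Qed.

Lemma cvg_nondecreasing_cofinal {s t : R ^nat} {l : R} :
  nondecreasing_seq s -> nondecreasing_seq t ->
  (forall n, exists m, t n <= s m) -> (forall n, exists m, s n <= t m) ->
  s @ \oo --> l -> t @ \oo --> l.
Proof.
move=> snd tnd ts st sl.
have s_le n : s n <= l.
  rewrite -(cvg_lim _ sl) //; apply: nondecreasing_cvgn_le => //.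
  by apply/cvg_ex; exists l.
have tc : cvgn t.
  apply: (nondecreasing_is_cvgn tnd); exists l => _ [n _ <-].
  by have [m /le_trans] := ts n; apply.
have t_le n : t n <= limn t by exact: nondecreasing_cvgn_le.
suff -> : l = limn t by [].
apply/le_anti/andP; split.
- apply: (cvgr_to_le sl); apply: nearW => n.
  by have [m /le_trans] := st n; apply.
- apply: (cvgr_to_le tc); apply: nearW => n.
  by have [m /le_trans] := ts n; apply.
Qed.

Lemma cvg_series_perm {u : R ^nat} {t t' : nat -> nat} (l : R) :
  (forall n, 0 <= u n) -> cancel t t' -> cancel t' t ->
  (series u @ \oo --> l) = (series (u \o t) @ \oo --> l).
Proof.
move=> u0 tK t'K.
have ut0 n : 0 <= (u \o t) n by exact: u0.
have ut_le := series_comp_inj_le u0 (can_inj tK).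
have u_le n : exists m, series u n <= series (u \o t) m.
  have /funext uE : u =1 (u \o t) \o t' by move=> k /=; rewrite t'K.
  by rewrite [in series u n]uE; exact: (series_comp_inj_le ut0 (can_inj t'K)).
have ndu := nondecreasing_series_ge0 u0.
have ndut := nondecreasing_series_ge0 ut0.
by apply/propext; split; exact: cvg_nondecreasing_cofinal.
Qed.

Lemma limn_series_perm {u : R ^nat} {t t' : nat -> nat} :
  (forall n, 0 <= u n) -> cancel t t' -> cancel t' t ->
  limn (series u) = limn (series (u \o t)).
Proof.
move=> u0 tK t'K.
have /funext E l := cvg_series_perm l u0 tK t'K.
by rewrite /lim /lim_in E.
Qed.

Lemma is_cvgn_series_comp_inj {u : R ^nat} {t : nat -> nat} :
  (forall n, 0 <= u n) -> injective t ->
  cvgn (series u) -> cvgn (series (u \o t)).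
Proof.
move=> u0 tinj cu.
apply: nondecreasing_is_cvgn.
  by apply: nondecreasing_series_ge0 => n; exact: u0.
exists (limn (series u)) => _ [n _ <-].
have [m /le_trans] := series_comp_inj_le u0 tinj n; apply.
exact: (nondecreasing_cvgn_le (nondecreasing_series_ge0 u0) cu).
Qed.

End NonnegativeSeries.

Section Homeomorphism.
Context {T U : topologicalType} {f : T -> U} {g : U -> T}.
Hypotheses (fK : cancel f g) (gK : cancel g f).

Lemma closure_image_subset (E : set T) :
  continuous g -> closure (f @` E) `<=` f @` closure E.
Proof.
move=> gcont x clx; exists (g x); last exact: gK.
move=> B /gcont gB; have [_ [[e Ee <-] Be]] := clx _ gB.
by exists e; split => //; rewrite -(fK e).
Qed.

Lemma compact_closure_image {E : set T} : continuous f -> continuous g ->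
  compact (closure E) -> compact (closure (f @` E)).
Proof.
move=> fcont gcont cE.
apply: (@subclosed_compact _ _ (f @` closure E)).
- exact: closed_closure.
- by apply: continuous_compact cE; exact: continuous_subspaceT.
- exact: closure_image_subset.
Qed.

End Homeomorphism.

Lemma set_bij_glue {T : Type} {U : pointedType} {E : set T} {F : set U}
    {A : set T} {B : set U} :
  A `<=` E -> B `<=` F -> A #= B -> E `\` A #= F `\` B ->
  exists sigma : T -> U, set_bij E F sigma /\ sigma @` A = B.
Proof.
move=> AE BF /pcard_eqP[f] /pcard_eqP[g].
have AAc : [disjoint A & E `\` A] by apply/disj_set2P; exact: setDIK.
have BBc : [disjoint B & F `\` B] by apply/disj_set2P; exact: setDIK.
exists (glue AAc BBc f g); split.
- have glue_bij : set_bij (A `|` E `\` A) (B `|` F `\` B) (glue AAc BBc f g) := bij.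
  by rewrite !setDUK in glue_bij.
- rewrite -[RHS](image_eq f); apply: eq_imagel => x Ax; exact: glue1 (mem_set Ax).
Qed.

(* The coordinates X_1, X_2, ... of Z_p sit at the indices 0, 1, ... of the
   second component of a point, so a permutation f of Npos acts on these
   indices as j |-> f (j + 1) - 1. *)
Definition conj_succ (f : nat -> nat) (j : nat) : nat := (f j.+1).-1.

Lemma conj_succK {f g : nat -> nat} :
  {homo g : n / Npos n} -> {in Npos, cancel g f} -> cancel (conj_succ g) (conj_succ f).
Proof. by move=> gN gK j; rewrite /conj_succ prednK ?gK ?inE //; exact: gN. Qed.

Lemma conj_succ_set_bij {sigma : nat -> nat} {A B : set nat} :
  set_bij Npos Npos sigma -> A `<=` Npos -> sigma @` A = B ->
  exists t t' : nat -> nat, [/\ cancel t t', cancel t' t,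
    forall j, A j.+1 -> B (t j).+1 & forall j, B j.+1 -> A (t' j).+1].
Proof.
move=> sbij AN sAB; have tbij := bijpinv_bij (fun=> point) sbij.
have sK := pinvKV (fun=> point) (set_bij_inj sbij).
exists (conj_succ sigma), (conj_succ (pinv Npos sigma)); split.
- exact: (conj_succK (set_bij_homo sbij) sK).
- exact: (conj_succK (set_bij_homo tbij) (surjpK (fun=> point) (set_bij_surj sbij))).
- move=> j Aj; rewrite /conj_succ prednK; last exact: (set_bij_homo sbij (ltn0Sn j)).
  by rewrite -sAB; exists j.+1.
- move=> j; rewrite -sAB /conj_succ => -[a Aa <-].
  by rewrite sK ?inE ?prednK //; exact: AN.
Qed.

Section CoordinatePermutation.
Context {R : realType} {X Y : normedModType R} {p : R}.

Definition lp_perm (t : nat -> nat) (z : lp_carrier X Y) : lp_carrier X Y :=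
  (z.1, z.2 \o t).

Lemma lp_permD (t : nat -> nat) (a : R) (u v : lp_carrier X Y) :
  lp_perm t (a *: u + v) = a *: lp_perm t u + lp_perm t v.
Proof. by []. Qed.

Lemma lp_permB (t : nat -> nat) (u v : lp_carrier X Y) :
  lp_perm t (u - v) = lp_perm t u - lp_perm t v.
Proof. by []. Qed.

Lemma lp_permK {t t' : nat -> nat} : cancel t' t -> cancel (lp_perm t) (lp_perm t').
Proof. by move=> t'K [y f]; congr pair; apply/funext => j /=; rewrite t'K. Qed.

Lemma lp_mem_perm {t : nat -> nat} {z : lp_carrier X Y} :
  injective t -> lp_mem p z -> lp_mem p (lp_perm t z).
Proof. by move=> tinj; apply: (is_cvgn_series_comp_inj _ tinj) => n; exact: powR_ge0. Qed.

Lemma lp_norm_perm {t t' : nat -> nat} (z : lp_carrier X Y) :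
  cancel t t' -> cancel t' t -> lp_norm p (lp_perm t z) = lp_norm p z.
Proof.
move=> tK t'K; have z0 n : 0 <= `|z.2 n| `^ p by exact: powR_ge0.
by rewrite /lp_norm (limn_series_perm z0 tK t'K).
Qed.

Definition zperm {t : nat -> nat} (tinj : injective t) (z : Defs.Zp X Y p) :
  Defs.Zp X Y p := exist _ (lp_perm t (zval z)) (lp_mem_perm tinj (proj2_sig z)).

Lemma zval_zperm {t : nat -> nat} (tinj : injective t) (z : Defs.Zp X Y p) :
  zval (zperm tinj z) = lp_perm t (zval z).
Proof. by []. Qed.

Lemma zval_inj : injective (@zval R X Y p).
Proof. by move=> [z hz] [w hw] /= zw; apply: eq_exist. Qed.

Lemma zperm_J0 {t : nat -> nat} (tinj : injective t) (hp : 1 < p) (y : Y) :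
  zperm tinj (J0 X hp y) = J0 X hp y.
Proof. exact: zval_inj. Qed.

Section Bijection.
Context {t t' : nat -> nat} (tK : cancel t t') (t'K : cancel t' t).

Lemma zpermK : cancel (zperm (can_inj tK)) (zperm (can_inj t'K)).
Proof. by move=> z; apply: zval_inj; exact: lp_permK. Qed.

Lemma lp_norm_zperm (z : Defs.Zp X Y p) :
  lp_norm p (zval (zperm (can_inj tK) z)) = lp_norm p (zval z).
Proof. by rewrite zval_zperm (lp_norm_perm _ tK t'K). Qed.

Lemma zdist_zperm (z w : Defs.Zp X Y p) :
  zdist (zperm (can_inj tK) z) (zperm (can_inj tK) w) = zdist z w.
Proof. by rewrite /zdist !zval_zperm -lp_permB (lp_norm_perm _ tK t'K). Qed.

Lemma continuous_zperm : continuous (zperm (can_inj tK)).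
Proof.
apply/continuousP => U oU; move=> z Uz.
have [e e0 ball_e] := oU (zperm (can_inj tK) z) Uz.
exists e => [//|w zw].
by apply: (ball_e (zperm (can_inj tK) w)); rewrite zdist_zperm.
Qed.

Lemma zperm_Jk (hp : 1 < p) (k : nat) (x : X) :
  zperm (can_inj tK) (Jk Y hp k x) = Jk Y hp (t' k.-1).+1 x.
Proof.
apply: zval_inj; congr pair; apply/funext => j /=.
by congr (if _ then _ else _); apply/eqP/eqP => [<-|->].
Qed.

End Bijection.
End CoordinatePermutation.

Section Conjugation.
Context {R : realType} {X Y : normedModType R} {p : R}.
Context {t t' : nat -> nat} (tK : cancel t t') (t'K : cancel t' t).

Definition zconj (S : Defs.Zp X Y p -> Defs.Zp X Y p) : Defs.Zp X Y p -> Defs.Zp X Y p :=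
  zperm (can_inj t'K) \o S \o zperm (can_inj tK).

Lemma zconj_norm_le (S : Defs.Zp X Y p -> Defs.Zp X Y p) (M : R) :
  (forall z, lp_norm p (zval (S z)) <= M * lp_norm p (zval z)) ->
  forall z, lp_norm p (zval (zconj S z)) <= M * lp_norm p (zval z).
Proof.
move=> S_le z; rewrite /zconj /= (lp_norm_perm _ t'K tK).
by rewrite -(lp_norm_zperm tK t'K z); exact: S_le.
Qed.

Lemma zbdd_lin_zconj S : zbdd_lin S -> zbdd_lin (zconj S).
Proof.
move=> [S_lin [M S_le]]; split; last by exists M; exact: zconj_norm_le.
move=> a z1 z2 z3 z3E; rewrite /zconj /=.
rewrite (S_lin a (zperm (can_inj tK) z1) (zperm (can_inj tK) z2)) ?lp_permD //.
by rewrite !zval_zperm z3E lp_permD.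
Qed.

Lemma zcompact_op_zconj S : zcompact_op S -> zcompact_op (zconj S).
Proof.
move=> [S_bdd S_cpt]; split; first exact: zbdd_lin_zconj.
have cpt := compact_closure_image (zpermK t'K tK) (zpermK tK t'K)
  (continuous_zperm t'K tK) (continuous_zperm tK t'K) S_cpt.
apply: (subclosed_compact _ cpt); first exact: closed_closure.
apply: closureS => _ [z z_le1 <-].
exists (S (zperm (can_inj tK) z)); last by [].
exists (zperm (can_inj tK) z); last by [].
by rewrite /= (lp_norm_zperm tK t'K).
Qed.

Lemma I_ideal_zconj (hp : 1 < p) {A B : set nat} {S : Defs.Zp X Y p -> Defs.Zp X Y p} :
  B `<=` Npos -> (forall j, B j.+1 -> A (t' j).+1) ->
  I_ideal hp A S -> I_ideal hp B (zconj S).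
Proof.
move=> BN BA [S_cpt S_0 S_k]; split; first exact: zcompact_op_zconj.
- by rewrite /zconj /=; under eq_fun do rewrite zperm_J0.
move=> [/BN //|j /BA Aj]; rewrite /zconj /=.
by under eq_fun do rewrite (zperm_Jk tK t'K); exact: S_k.
Qed.

End Conjugation.

Lemma zconjK {R : realType} {X Y : normedModType R} {p : R} {t t' : nat -> nat}
    (tK : cancel t t') (t'K : cancel t' t) (S : Defs.Zp X Y p -> Defs.Zp X Y p) :
  zconj t'K tK (zconj tK t'K S) = S.
Proof. by apply/funext => z; rewrite /zconj /= !zpermK. Qed.

Lemma banach_alg_iso_zconj {R : realType} {X Y : normedModType R} {p : R} (hp : 1 < p)
    {t t' : nat -> nat} (tK : cancel t t') (t'K : cancel t' t) (A B : set nat) :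
  A `<=` Npos -> B `<=` Npos ->
  (forall j, A j.+1 -> B (t j).+1) -> (forall j, B j.+1 -> A (t' j).+1) ->
  banach_alg_iso (@I_ideal R X Y p hp A) (@I_ideal R X Y p hp B).
Proof.
move=> AN BN AB BA; exists (zconj tK t'K); split.
- by move=> S; exact: (I_ideal_zconj tK t'K hp BN BA).
- split=> [S1 S2 _ _ /(congr1 (zconj t'K tK))|T IT]; first by rewrite !zconjK.
  exists (zconj t'K tK T); last exact: zconjK.
  exact: (I_ideal_zconj t'K tK hp AN AB IT).
- by move=> a S1 S2 S3 _ _ _ S3E z; rewrite /zconj /= S3E.
- by move=> S1 S2 _ _; apply/funext => z; rewrite /zconj /= zpermK.
exists 1 => // S _ M; rewrite mul1r; split => [|S_le].
  exact: zconj_norm_le.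
by rewrite -(zconjK tK t'K S); exact: zconj_norm_le.
Qed.

Theorem lemma2p2 (R : realType) (p : R) (hp : 1 < p)
  (X Y : completeNormedModType R) :
  approx_property X ->
  [set S : X -> Y | approx_op S] `<` [set S : X -> Y | compact_op S] ->
  forall A B : set nat,
    set0 `<` A -> A `<` Npos -> set0 `<` B -> B `<` Npos ->
    ((exists sigma : nat -> nat, set_bij Npos Npos sigma /\ sigma @` A = B)
     \/ (A #= B /\ (Npos `\` A) #= (Npos `\` B))) ->
    banach_alg_iso (@I_ideal R X Y p hp A) (@I_ideal R X Y p hp B).
Proof.
move=> _ _ A B _ [AN _] _ [BN _] perm_or_card.
have [sigma [sbij sAB]] : exists sigma : nat -> nat,
    set_bij Npos Npos sigma /\ sigma @` A = B.
  by case: perm_or_card => [//|[cardA cardAc]]; exact: (set_bij_glue AN BN cardA cardAc).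
have [t [t' [tK t'K AB BA]]] := conj_succ_set_bij sbij AN sAB.
exact: (banach_alg_iso_zconj hp tK t'K A B AN BN AB BA).
Qed.
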